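(* Let $1<n\leq m$ and let $v\in Z_{n,m}$ with $h(v)\geq h_{n,m}$ and $\sum_{i\in I_c(v)}v_i=0$. Then $d(v,0)\leq D_{n,m}$.
   Context: Elements of $\mathbb{Z}_n$ are identified with representatives in $\{0,\dots,n-1\}$ (so $v_0,v_{m+1}$ are such integers in sums). $Z_{n,m}$ has vertices $u=(u_0,\dots,u_{m+1})\in\mathbb{Z}_n\times\{-1,0,1\}^m\times\mathbb{Z}_n$ with $\sum u_i\equiv0\pmod n$; $u,v$ adjacent if there is $0\leq i\leq m$ with $u_j=v_j$ for $j\notin\{i,i+1\}$ and either ($u_i=v_i+1$, $u_{i+1}=v_{i+1}-1$) or ($u_i=v_i-1$, $u_{i+1}=v_{i+1}+1$), arithmetic in coordinates $0,m+1$ in $\mathbb{Z}_n$. $d$ is graph distance, $0$ the all-zero vertex. $\operatorname{Piv}(v)$ is the set of $-1\le p\le m+1$ with $n\mid\sum_{i=0}^pv_i$. $p_l(v)=\max\{p\in\operatorname{Piv}(v):p<\frac m2\}$, $p_r(v)=\min\{p\in\operatorname{Piv}(v):p\ge\frac m2\}$, $I_c(v)=\{p_l(v)+1,\dots,p_r(v)\}$, $h(v)=\min\{|p-\frac m2|:p\in\operatorname{Piv}(v)\}$, $h_{n,m}=\frac n2$ if $2\mid(m-n)$ and $\frac{n+1}2$ otherwise. $u^{(0)}$: $u_i=1$ ($1\le i\le m$), $u_0\equiv-\lfloor\frac{m-n}2\rfloor\pmod n$; for $n<m$, $m-n$ odd, $u^{(1)}$: $u_{\lceil(m+1)/2\rceil}=0$,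 other $u_i=1$ ($1\le i\le m$), $u_0\equiv-\lfloor\frac{m-n}2\rfloor\pmod n$. $D_{n,m}=d(u^{(0)},0)$ if $2\mid(m-n)$, else $\max\{d(u^{(0)},0),d(u^{(1)},0)\}$. *)

From mathcomp Require Import all_boot all_order all_algebra.
Set Implicit Arguments. Unset Strict Implicit. Unset Printing Implicit Defensive.
Import Order.TTheory GRing.Theory Num.Theory.
Local Open Scope ring_scope.

(* A vertex u = (u_0,...,u_{m+1}) of Z_{n,m} is a sequence of integers of
   size m+2; u_0, u_{m+1} are the representatives in {0,...,n-1} of elements
   of Z_n, u_1..u_m lie in {-1,0,1}, and the total sum is 0 mod n. *)
Definition is_vertex (n m : nat) (u : seq int) : Prop :=
  [/\ size u = m.+2,
      (0 <= u`_0 < n%:Z),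
      (0 <= u`_m.+1 < n%:Z),
      (forall i : nat, (0 < i <= m)%N -> u`_i \in [:: -1; 0; 1]) &
      (n%:Z %| \sum_(i < m.+2) u`_i)%Z].

Definition coord_eq (n m i : nat) (x y : int) : bool :=
  if (i == 0)%N || (i == m.+1)%N then (x == y %[mod n%:Z])%Z else x == y.

Definition adj (n m : nat) (u v : seq int) : Prop :=
  is_vertex n m u /\ is_vertex n m v /\
  exists i : nat, (i <= m)%N /\
    (forall j : nat, j != i -> j != i.+1 -> u`_j = v`_j) /\
    ((coord_eq n m i u`_i (v`_i + 1) && coord_eq n m i.+1 u`_i.+1 (v`_i.+1 - 1))
     \/ (coord_eq n m i u`_i (v`_i - 1) && coord_eq n m i.+1 u`_i.+1 (v`_i.+1 + 1))).

(* within n m k u v : d(u,v) <= k, i.e. there is a walk of length <= k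
   from u to v in Z_{n,m} *)
Fixpoint within (n m k : nat) (u v : seq int) : Prop :=
  match k with
  | 0%N => u = v
  | k'.+1 => within n m k' u v \/ exists w, adj n m u w /\ within n m k' w v
  end.

Definition zero_vertex (m : nat) : seq int := nseq m.+2 0.

(* Pivots, shifted by one: q = p + 1 with 0 <= q <= m+2 (i.e. -1 <= p <= m+1);
   q is a (shifted) pivot iff n | sum_{i=0}^{q-1} v_i. *)
Definition piv (n m : nat) (v : seq int) (q : nat) : bool :=
  (q <= m.+2)%N && (n%:Z %| \sum_(0 <= i < q) v`_i)%Z.

(* p < m/2  <=>  2q < m+2 ;  p >= m/2 <=> 2q >= m+2 *)
(* shifted p_l :  q_l = p_l + 1 *)
Definition ql (n m : nat) (v : seq int) : nat :=
  (\max_(q < m.+3 | piv n m v q && (q.*2 < m.+2)%N) q)%N.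
(* shifted p_r :  q_r = p_r + 1 *)
Definition qr (n m : nat) (v : seq int) : nat :=
  \big[minn/m.+2]_(q < m.+3 | piv n m v q && (m.+2 <= q.*2)%N) q.

(* I_c(v) = {p_l+1, ..., p_r} = {q_l, ..., q_r - 1}; sum of v_i over I_c *)
Definition sum_Ic (n m : nat) (v : seq int) : int :=
  \sum_(ql n m v <= i < qr n m v) v`_i.

(* 2 h(v) = min { |2p - m| : p in Piv(v) } = min { |2q - (m+2)| : q shifted pivot } *)
Definition h2 (n m : nat) (v : seq int) : nat :=
  \big[minn/m.+2]_(q < m.+3 | piv n m v q) `|q.*2 - m.+2|%N.

(* 2 h_{n,m} *)
Definition h2nm (n m : nat) : nat := if ~~ odd (m - n) then n else n.+1.

Definition complete (n : nat) (u0 : int) (mid : seq int) : seq int :=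
  u0 :: mid ++ [:: ((- (u0 + \sum_(x <- mid) x)) %% n%:Z)%Z].

Definition u0_coord (n m : nat) : int := ((- ((m - n)./2)%:Z) %% n%:Z)%Z.

Definition u_zero (n m : nat) : seq int :=
  complete n (u0_coord n m) (nseq m 1).

(* u^(1): u_{ceil((m+1)/2)} = 0, i.e. middle position ceil((m+1)/2) - 1 *)
Definition u_one (n m : nat) : seq int :=
  complete n (u0_coord n m)
    (mkseq (fun j => if (j.+1 == (m.+2)./2)%N then 0 else 1) m).

(* d(v, 0) <= D_{n,m}, phrased as: for every k with D_{n,m} <= k, d(v,0) <= k *)
Definition dist_le_D (n m : nat) (v : seq int) : Prop :=
  forall k : nat,
    within n m k (u_zero n m) (zero_vertex m) ->
    (odd (m - n) -> within n m k (u_one n m) (zero_vertex m)) ->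
    within n m k v (zero_vertex m).

(* A vertex v is recorded by its prefix sums S_q = v_0 + ... + v_(q-1).  An edge
   changes a single S_q (1 <= q <= m+1) by +-1, up to a common shift of all of
   them by a multiple of n (from the reduction of v_0 mod n), and a unit can
   always be moved at a q where |S_q - t| is maximal.  Hence d(v, 0) is the
   least value, over multiples t of n, of the potential
   sum_(q=1..m+1) |S_q - t|.
   If h(v) >= h_(n,m) and the sum over I_c(v) vanishes, then S equals the same
   multiple K of n at both ends of I_c(v), stays strictly between K and a
   neighbouring multiple K' inside it, and is 1-Lipschitz outside it; so the
   potentials of v at K and K' add up to at most sum_q W_q, where
   W_q = n + max(0, |2q - m - 2| - 2 h_(n,m)).  Pairing q with m + 2 - q shows
   that twice the potential of u^(0) (of u^(1), plus one, when m - n is odd)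
   at any multiple of n is at least sum_q W_q, whence d(v, 0) <= D_(n,m). *)

From mathcomp Require Import all_boot all_order all_algebra zify.
Set Implicit Arguments. Unset Strict Implicit. Unset Printing Implicit Defensive.
Import Order.TTheory GRing.Theory Num.Theory.
Local Open Scope ring_scope.

(** * Prefix sums and the potential *)

Definition psum (v : seq int) (q : nat) : int := \sum_(0 <= i < q) v`_i.

Definition potential (m : nat) (v : seq int) (t : int) : int :=
  \sum_(1 <= q < m.+2) `|psum v q - t|.

Lemma psumS v q : psum v q.+1 = psum v q + v`_q.
Proof. by rewrite /psum big_nat_recr. Qed.

Lemma psum1 v : psum v 1 = v`_0.
Proof. by rewrite /psum big_nat1. Qed.

Lemma psum_cons x s q : psum (x :: s) q.+1 = x + psum s q.
Proof. by rewrite /psum big_nat_recl. Qed.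

Lemma psum_cat (s t : seq int) q : (q <= size s)%N -> psum (s ++ t) q = psum s q.
Proof.
move=> le_q_s; apply: eq_big_nat => i /andP [_ lt_i_q].
by rewrite nth_cat (leq_trans lt_i_q le_q_s).
Qed.

Lemma sum_nat_indicator m i : (1 <= i <= m.+1)%N ->
  \sum_(1 <= q < m.+2) (if q == i then 1 else 0 : int) = 1.
Proof. by move=> i_range; rewrite -big_mkcond big_nat1_eq; have -> : (1 <= i < m.+2)%N by lia. Qed.

Lemma mem_unit_ball (x : int) : (x \in [:: -1; 0; 1]) = (-1 <= x <= 1).
Proof. by rewrite !inE; apply/idP/idP; lia. Qed.

Section Vertex.
Variables (n m : nat) (v : seq int).
Hypothesis vertex_v : is_vertex n m v.

Lemma vertex_size : size v = m.+2.
Proof. by case: vertex_v. Qed.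

Lemma vertex_mid l : (0 < l <= m)%N -> -1 <= v`_l <= 1.
Proof. by case: vertex_v => _ _ _ mid _ l_mid; rewrite -mem_unit_ball mid. Qed.

Lemma vertex_dvd_psum : (n%:Z %| psum v m.+2)%Z.
Proof. by case: vertex_v => _ _ _ _; rewrite /psum big_mkord. Qed.

Lemma psum_lipschitz x y : (1 <= x <= y)%N -> (y <= m.+1)%N ->
  `|psum v y - psum v x| <= (y - x)%N%:Z.
Proof.
move=> le_1xy; elim: y le_1xy => [|y IH] le_1xy le_y_m; first by lia.
have [->|ne_xy] := eqVneq x y.+1; first by rewrite subrr normr0 subnn.
have := IH ltac:(lia) ltac:(lia); have := @vertex_mid y ltac:(lia).
by rewrite psumS; lia.
Qed.

End Vertex.

Lemma psum_local_change m i (u w : seq int) (e c : int) : (i <= m)%N ->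
  u`_0 = w`_0 + c + (if i == 0%N then e else 0) ->
  (forall l, (0 < l <= m)%N -> l != i -> l != i.+1 -> u`_l = w`_l) ->
  ((0 < i)%N -> u`_i = w`_i + e) ->
  ((i < m)%N -> u`_i.+1 = w`_i.+1 - e) ->
  forall q, (1 <= q <= m.+1)%N ->
    psum u q = psum w q + c + (if q == i.+1 then e else 0).
Proof.
move=> le_i_m u0 u_other u_i u_i1; elim=> [//|[|q] IH] q_range.
  by rewrite !psum1 u0 eqSS eq_sym.
rewrite psumS (psumS w) IH; last by lia.
have [eq_qi|ne_qi] := eqVneq q.+1 i.
  by subst i; rewrite u_i // ?eqxx ltn_eqF //; lia.
have [/succn_inj eq_qi|ne_qi1] := eqVneq q.+1 i.+1.
  by subst i; rewrite u_i1 // ?eqxx gtn_eqF //; lia.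
by rewrite -[q.+2 == i.+1]/(q.+1 == i) (negbTE ne_qi) u_other //; lia.
Qed.

(** * The potential measures the distance to 0 *)

Lemma coord_eq_mid n m l x y : (0 < l <= m)%N -> coord_eq n m l x y -> x = y.
Proof.
move=> l_mid; rewrite /coord_eq.
have -> : (l == 0%N) || (l == m.+1) = false by lia.
by move/eqP.
Qed.

Lemma coord_eq_end n m l x y : (l == 0%N) || (l == m.+1) ->
  coord_eq n m l x y -> exists2 c : int, (n%:Z %| c)%Z & x = y + c.
Proof.
move=> l_end; rewrite /coord_eq l_end eqz_mod_dvd => dvd_xy.
by exists (x - y); rewrite // addrC subrK.
Qed.

Lemma adj_psum n m u w : adj n m u w ->
  exists i (e c : int), [/\ (i <= m)%N, e = 1 \/ e = -1, (n%:Z %| c)%Z &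
    forall q, (1 <= q <= m.+1)%N ->
      psum u q = psum w q + c + (if q == i.+1 then e else 0)].
Proof.
case=> _ [_ [i [le_i_m [u_other moves]]]].
have [e e_unit [eq_i eq_i1]] : exists2 e : int, e = 1 \/ e = -1 &
    coord_eq n m i u`_i (w`_i + e) /\ coord_eq n m i.+1 u`_i.+1 (w`_i.+1 - e).
  case: moves => /andP [eq_i eq_i1]; first by exists 1; [left | split].
  by exists (-1); [right | rewrite opprK; split].
have [c dvd_c u0] : exists2 c : int, (n%:Z %| c)%Z &
    u`_0 = w`_0 + c + (if i == 0%N then e else 0).
  case: (i =P 0%N) => [i0|/eqP i_neq0].
    by subst i; have [c dvd_c ->] := @coord_eq_end n m 0 _ _ isT eq_i; exists c; last lia.
  by exists 0; rewrite ?dvdz0 // u_other ?(eq_sym 0%N) //; lia.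
exists i, e, c; split=> //.
apply: psum_local_change => // [l _ | i_gt0 | lt_i_m]; first exact: u_other.
  by apply: coord_eq_mid eq_i; lia.
by apply: coord_eq_mid eq_i1; lia.
Qed.

Lemma potential_adj n m u w t : adj n m u w -> (n%:Z %| t)%Z ->
  exists2 t', (n%:Z %| t')%Z & potential m u t' <= potential m w t + 1.
Proof.
move=> /adj_psum [i [e [c [le_i_m e_unit dvd_c shift]]]] dvd_t.
exists (t + c); first exact: rpredD.
rewrite /potential -(@sum_nat_indicator m i.+1 ltac:(lia)) -big_split /=.
apply: ler_sum_nat => q q_range; rewrite shift; last by lia.
by case: e_unit => ->; case: ifP => _; lia.
Qed.

Lemma potential_zero_vertex m : potential m (zero_vertex m) 0 = 0.
Proof.
rewrite /potential big1_seq // => q _.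
by rewrite /psum big1_seq ?subr0 ?normr0 // => i _; rewrite nth_nseq if_same.
Qed.

Lemma within_potential n m k u : within n m k u (zero_vertex m) ->
  exists2 t, (n%:Z %| t)%Z & potential m u t <= k%:Z.
Proof.
elim: k u => [|k IH] u /=; first by move=> ->; exists 0; rewrite ?potential_zero_vertex.
case=> [/IH [t dvd_t le_k] | [w [uw /IH [t dvd_t le_k]]]]; first by exists t; last lia.
by have [t' dvd_t' le_t'] := potential_adj uw dvd_t; exists t'; last lia.
Qed.

Definition reduce_coord (n m l : nat) (x : int) : int :=
  if (l == 0%N) || (l == m.+1) then (x %% n%:Z)%Z else x.

Lemma reduce_coord_mid n m l x : (0 < l <= m)%N -> reduce_coord n m l x = x.
Proof.
move=> l_mid; rewrite /reduce_coord.
by have -> : (l == 0%N) || (l == m.+1) = false by lia.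
Qed.

Lemma reduce_coord_end n m l x : (0 < n)%N -> (l == 0%N) || (l == m.+1) ->
  0 <= reduce_coord n m l x < n%:Z.
Proof. by move=> n_gt0 l_end; rewrite /reduce_coord l_end modz_ge0 ?ltz_pmod //; lia. Qed.

Lemma reduce_coordE n m l x :
  exists2 c : int, (n%:Z %| c)%Z & reduce_coord n m l x = x + c.
Proof.
rewrite /reduce_coord; case: ifP => _; last by exists 0; rewrite ?addr0.
exists (- (x %/ n%:Z)%Z * n%:Z); first exact: dvdz_mull.
by rewrite {2}(divz_eq x n%:Z) mulNr addrAC subrr add0r.
Qed.

Lemma coord_eq_reduce n m l x d : coord_eq n m l x (reduce_coord n m l (x + d) - d).
Proof.
rewrite /coord_eq /reduce_coord; case: (_ || _); last by rewrite addrK.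
rewrite eqz_mod_dvd; apply/dvdzP; exists ((x + d) %/ n%:Z)%Z.
have := divz_eq (x + d) n%:Z; set q := (_ %/ _)%Z; set r := (_ %% _)%Z; lia.
Qed.

Definition transfer (n m : nat) (v : seq int) (i : nat) (e : int) : seq int :=
  mkseq (fun l => if l == i then reduce_coord n m i (v`_i - e)
                  else if l == i.+1 then reduce_coord n m i.+1 (v`_i.+1 + e)
                  else v`_l) m.+2.

Section Transfer.
Variables (n m : nat) (v : seq int) (i : nat) (e : int).
Hypotheses (vertex_v : is_vertex n m v) (le_i_m : (i <= m)%N).

Let w := transfer n m v i e.

Lemma nth_transfer_i : w`_i = reduce_coord n m i (v`_i - e).
Proof. by rewrite nth_mkseq ?eqxx //; lia. Qed.

Lemma nth_transfer_i1 : w`_i.+1 = reduce_coord n m i.+1 (v`_i.+1 + e).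
Proof. by rewrite nth_mkseq ?eqxx ?gtn_eqF //; lia. Qed.

Lemma nth_transfer_other l : l != i -> l != i.+1 -> w`_l = v`_l.
Proof.
move=> ne_li ne_li1; case: (ltnP l m.+2) => [lt_l_m | le_m_l].
  by rewrite nth_mkseq // (negbTE ne_li) (negbTE ne_li1).
by rewrite !nth_default ?size_mkseq ?(vertex_size vertex_v).
Qed.

Lemma transfer_psum : exists2 c : int, (n%:Z %| c)%Z &
  forall q, (1 <= q <= m.+1)%N -> psum w q = psum v q + c + (if q == i.+1 then - e else 0).
Proof.
have [c dvd_c red_i] := reduce_coordE n m i (v`_i - e).
exists (if i == 0%N then c else 0); first by case: ifP; rewrite ?dvdz0.
apply: psum_local_change => // [|l _ ne_li ne_li1 | i_gt0 | lt_i_m].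
- case: (i =P 0%N) => [i0|/eqP i_neq0].
    by rewrite -[X in w`_X]i0 nth_transfer_i red_i i0; lia.
  by rewrite nth_transfer_other ?addr0 // eq_sym.
- exact: nth_transfer_other.
- by rewrite nth_transfer_i reduce_coord_mid //; lia.
- by rewrite nth_transfer_i1 reduce_coord_mid ?opprK //; lia.
Qed.

Lemma transfer_vertex : (1 < n)%N ->
  ((0 < i)%N -> -1 <= v`_i - e <= 1) -> ((i < m)%N -> -1 <= v`_i.+1 + e <= 1) ->
  is_vertex n m w.
Proof.
move=> n_gt1 mid_i mid_i1.
have n_gt0 : (0 < n)%N by lia.
have [c dvd_c shift] := transfer_psum.
split.
- by rewrite size_mkseq.
- case: (i =P 0%N) => [i0|/eqP i_neq0].
    by rewrite -[X in w`_X]i0 nth_transfer_i reduce_coord_end ?i0.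
  by rewrite nth_transfer_other ?(eq_sym 0%N) //; case: vertex_v.
- case: (i =P m) => [im|/eqP i_neq_m].
    by rewrite -[X in w`_X.+1]im nth_transfer_i1 reduce_coord_end // im eqxx orbT.
  by rewrite nth_transfer_other; [case: vertex_v | lia | lia].
- move=> l l_mid; rewrite mem_unit_ball.
  have [eq_li|ne_li] := eqVneq l i.
    by subst l; rewrite nth_transfer_i reduce_coord_mid //; apply: mid_i; lia.
  have [eq_li1|ne_li1] := eqVneq l i.+1.
    by subst l; rewrite nth_transfer_i1 reduce_coord_mid //; apply: mid_i1; lia.
  by rewrite nth_transfer_other // (vertex_mid vertex_v).
- have dvd_v := vertex_dvd_psum vertex_v; rewrite psumS in dvd_v.
  have -> : \sum_(l < m.+2) w`_l = psum w m.+2 by rewrite /psum big_mkord.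
  rewrite psumS shift; last by lia.
  case: (i =P m) => [im|/eqP i_neq_m].
    rewrite -[X in w`_X.+1]im nth_transfer_i1 im eqxx.
    have [c1 dvd_c1 ->] := reduce_coordE n m m.+1 (v`_m.+1 + e).
    rewrite (_ : _ + _ = psum v m.+1 + v`_m.+1 + (c + c1)); last by lia.
    by apply: rpredD => //; apply: rpredD.
  rewrite nth_transfer_other; try lia.
  have -> : (m.+1 == i.+1) = false by lia.
  by rewrite addr0 addrAC; apply: rpredD.
Qed.

Lemma transfer_adj : (1 < n)%N -> e = 1 \/ e = -1 ->
  ((0 < i)%N -> -1 <= v`_i - e <= 1) -> ((i < m)%N -> -1 <= v`_i.+1 + e <= 1) ->
  adj n m v w.
Proof.
move=> n_gt1 e_unit mid_i mid_i1.
split=> //; split; first exact: transfer_vertex.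
exists i; split=> //; split; first by move=> l ne_li ne_li1; rewrite nth_transfer_other.
rewrite nth_transfer_i nth_transfer_i1.
case: e_unit => ->; [left | right]; apply/andP; split.
- by have := coord_eq_reduce n m i v`_i (-1); rewrite opprK.
- exact: coord_eq_reduce.
- by rewrite opprK; exact: coord_eq_reduce.
- by have := coord_eq_reduce n m i.+1 v`_i.+1 (-1); rewrite opprK.
Qed.

End Transfer.

Lemma exists_argmax_nat (F : nat -> int) a b : (a <= b)%N ->
  exists2 q, (a <= q <= b)%N & forall q', (a <= q' <= b)%N -> F q' <= F q.
Proof.
move=> le_ab.
case: (@arg_maxP _ _ 'I_(b - a).+1 ord0 predT (fun j => F (a + j)%N) isT) => j _ max_j.
exists (a + j)%N => [|q' q'_range]; first by have := ltn_ord j; lia.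
by have := max_j (inord (q' - a)) isT; rewrite /= inordK ?subnKC //; lia.
Qed.

Lemma small_dvdz_eq0 (n : nat) (x : int) : 0 <= x < n%:Z -> (n%:Z %| x)%Z -> x = 0.
Proof. by move=> x_range /dvdz_mod0P; rewrite modz_small. Qed.

Lemma potential_ge0 m v t : 0 <= potential m v t.
Proof. by apply: sumr_ge0 => q _; apply: normr_ge0. Qed.

Lemma potential_eq0 n m v t : is_vertex n m v -> (n%:Z %| t)%Z ->
  potential m v t = 0 -> v = zero_vertex m.
Proof.
move=> vertex_v dvd_t /eqP; rewrite psumr_eq0 => [/allP flat|q _]; last exact: normr_ge0.
have psum_t q : (1 <= q <= m.+1)%N -> psum v q = t.
  move=> q_range; have := flat q; rewrite mem_index_iota /= => /(_ q_range).
  by rewrite normr_eq0 subr_eq0 => /eqP.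
have [size_v v0_range vm_range _ _] := vertex_v.
have v0_eq_t : v`_0 = t by rewrite -psum1 psum_t.
have t0 : t = 0 by rewrite -v0_eq_t (small_dvdz_eq0 v0_range) // v0_eq_t.
apply: (@eq_from_nth _ 0); first by rewrite size_v size_nseq.
move=> l; rewrite size_v => lt_l; rewrite nth_nseq lt_l.
case: l lt_l => [|l] lt_l; first by rewrite v0_eq_t.
case: (ltnP l m) => [lt_l_m | ge_l_m].
  by have := psumS v l.+1; rewrite (psum_t l.+1) ?(psum_t l.+2); lia.
have -> : l = m by lia.
apply: small_dvdz_eq0 vm_range _.
have := vertex_dvd_psum vertex_v; rewrite psumS psum_t; last by lia.
by rewrite t0 add0r.
Qed.

Lemma potential_descent n m v t : (1 < n)%N -> is_vertex n m v -> (n%:Z %| t)%Z ->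
  0 < potential m v t ->
  exists w t', [/\ adj n m v w, (n%:Z %| t')%Z & potential m w t' = potential m v t - 1].
Proof.
move=> n_gt1 vertex_v dvd_t pos.
have [[//|i] q_range q_max] := @exists_argmax_nat (fun q => `|psum v q - t|) 1 m.+1 isT.
have le_i_m : (i <= m)%N by lia.
have dev_pos : 0 < `|psum v i.+1 - t|.
  case: (ltrP 0 `|psum v i.+1 - t|) => // dev_le0.
  suff : potential m v t <= 0 by lia.
  rewrite /potential big_nat_cond; apply: sumr_le0 => q /andP [q_range' _].
  exact: le_trans (q_max q q_range') dev_le0.
have [sg sg_unit dev] : exists2 sg : int,
    sg = 1 \/ sg = -1 & `|psum v i.+1 - t| = sg * (psum v i.+1 - t).
  case: (lerP 0 (psum v i.+1 - t)) => sign; first by exists 1; [left | lia].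
  by exists (-1); [right | lia].
(* The deviation is maximal at i.+1, so the profile has a local extremum there and
   moving one unit across it keeps v_i and v_(i+1) in {-1, 0, 1}. *)
have extremal q : (1 <= q <= m.+1)%N -> sg * (psum v q - t) <= sg * (psum v i.+1 - t).
  by move=> q_range'; have := q_max q q_range'; rewrite /= -dev; case: sg_unit => ->; lia.
have mid_i : (0 < i)%N -> -1 <= v`_i - sg <= 1.
  move=> i_gt0; have := extremal i ltac:(lia); have := vertex_mid vertex_v (l:=i) ltac:(lia).
  by rewrite psumS; case: sg_unit => ->; lia.
have mid_i1 : (i < m)%N -> -1 <= v`_i.+1 + sg <= 1.
  move=> lt_i_m; have := extremal i.+2 ltac:(lia); have := vertex_mid vertex_v (l:=i.+1) ltac:(lia).
  by rewrite psumS; case: sg_unit => ->; lia.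
have [c dvd_c shift] := transfer_psum sg vertex_v le_i_m.
exists (transfer n m v i sg), (t + c); split; first exact: transfer_adj.
  exact: rpredD.
rewrite /potential -(@sum_nat_indicator m i.+1 ltac:(lia)) -sumrB.
apply: eq_big_nat => q q_range'; rewrite shift //.
by case: (q =P i.+1) => [->|_]; case: sg_unit dev dev_pos => ->; lia.
Qed.

Lemma potential_within n m k v t : (1 < n)%N -> is_vertex n m v -> (n%:Z %| t)%Z ->
  potential m v t <= k%:Z -> within n m k v (zero_vertex m).
Proof.
move=> n_gt1; elim: k v t => [|k IH] v t vertex_v dvd_t le_k.
  by apply: (potential_eq0 vertex_v dvd_t); have := potential_ge0 m v t; lia.
case: (ltrP 0 (potential m v t)) => [pos | le0]; last by left; apply: (IH v t) => //; lia.
have [w [t' [vw dvd_t' pot_w]]] := potential_descent n_gt1 vertex_v dvd_t pos.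
right; exists w; split=> //; apply: (IH w t') => //; last by lia.
by case: vw => _ [].
Qed.

(** * Vertices with a balanced central interval *)

Lemma walk_between_multiples (n : nat) (f : nat -> int) (a b : nat) (K sg : int) :
  sg = 1 \/ sg = -1 -> (n%:Z %| K)%Z ->
  (forall q, (a < q < b)%N -> ~~ (n%:Z %| f q)%Z) ->
  (forall q, (a < q)%N -> (q.+1 < b)%N -> `|f q.+1 - f q| <= 1) ->
  0 < sg * (f a.+1 - K) < n%:Z ->
  forall q, (a < q < b)%N -> 0 < sg * (f q - K) < n%:Z.
Proof.
move=> sg_unit dvd_K avoid step start; elim=> [//|q IH] q_range.
case: (ltnP a q) => [lt_aq | le_qa]; last by have -> : q = a by lia.
have := IH ltac:(lia); have := step q lt_aq ltac:(lia).
have ne_K : f q.+1 != K by apply: contraNneq (avoid q.+1 q_range) => ->.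
have ne_K' : f q.+1 != K + sg * n%:Z.
  by apply: contraNneq (avoid q.+1 q_range) => ->; apply: rpredD => //; apply: dvdz_mull.
by case: sg_unit ne_K ne_K' => ->; lia.
Qed.

Lemma first_step_sign n m v a : (1 < n)%N -> is_vertex n m v -> (a <= m)%N ->
  (n%:Z %| psum v a)%Z -> ~~ (n%:Z %| psum v a.+1)%Z ->
  exists2 sg : int, sg = 1 \/ sg = -1 & 0 < sg * (psum v a.+1 - psum v a) < n%:Z.
Proof.
move=> n_gt1 vertex_v le_a_m dvd_a ndvd_a1.
have ne_a1 : psum v a.+1 != psum v a by apply: contraNneq ndvd_a1 => ->.
case: a le_a_m dvd_a ndvd_a1 ne_a1 => [|a] le_a_m dvd_a ndvd_a1 ne_a1.
  have [_ v0_range _ _ _] := vertex_v.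
  by exists 1; [left | move: ne_a1; rewrite psum1 /psum big_geq //; lia].
have lip := psum_lipschitz vertex_v (x:=a.+1) (y:=a.+2) ltac:(lia) le_a_m.
case: (ltrP (psum v a.+2) (psum v a.+1)) => sign.
  by exists (-1); [right | lia].
by exists 1; [left | lia].
Qed.

(* [h] plays the role of 2 h_(n,m), and [q] is a pivot index shifted by one. *)
Definition weight (n h m q : nat) : int :=
  n%:Z + Num.max 0 (`|(q.*2)%:Z - (m.+2)%:Z| - h%:Z).

Lemma psum_between_multiples n m h v a b :
  (1 < n)%N -> (1 < h)%N -> is_vertex n m v ->
  (a.*2 + h <= m.+2)%N -> (m.+2 + h <= b.*2)%N -> (b <= m.+2)%N ->
  (n%:Z %| psum v a)%Z -> psum v b = psum v a ->
  (forall q, (a < q < b)%N -> ~~ (n%:Z %| psum v q)%Z) ->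
  exists K K', [/\ (n%:Z %| K)%Z, (n%:Z %| K')%Z &
    forall q, (1 <= q <= m.+1)%N -> `|psum v q - K| + `|psum v q - K'| <= weight n h m q].
Proof.
move=> n_gt1 h_gt1 vertex_v le_a le_b le_b_m dvd_a psum_b avoid.
have [sg sg_unit start] :=
  first_step_sign n_gt1 vertex_v (a:=a) ltac:(lia) dvd_a (avoid a.+1 ltac:(lia)).
set K := psum v a in dvd_a psum_b start.
have step q : (a < q)%N -> (q.+1 < b)%N -> `|psum v q.+1 - psum v q| <= 1.
  move=> lt_aq lt_qb.
  by have := psum_lipschitz vertex_v (x:=q) (y:=q.+1) ltac:(lia) ltac:(lia); rewrite subSnn.
have inside := walk_between_multiples sg_unit dvd_a avoid step start.
exists K, (K + sg * n%:Z); split=> //; first by apply: rpredD => //; apply: dvdz_mull.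
move=> q q_range.
suff dev : `|psum v q - K| + `|psum v q - (K + sg * n%:Z)| <= n%:Z + 2 * ((a - q) + (q - b))%N%:Z.
  by apply: le_trans dev _; rewrite /weight; lia.
case: (ltnP q a) => [lt_qa | le_aq].
  have := psum_lipschitz vertex_v (x:=q) (y:=a) ltac:(lia) ltac:(lia).
  by rewrite -/K; case: sg_unit => ->; lia.
case: (ltnP b q) => [lt_bq | le_qb].
  have := psum_lipschitz vertex_v (x:=b) (y:=q) ltac:(lia) ltac:(lia).
  by rewrite psum_b; case: sg_unit => ->; lia.
have [-> | ne_qa] := eqVneq q a; first by case: sg_unit => ->; lia.
have [-> | ne_qb] := eqVneq q b; first by rewrite psum_b; case: sg_unit => ->; lia.
by have := inside q ltac:(lia); case: sg_unit => ->; lia.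
Qed.

Lemma ql_pivot n m v : piv n m v (ql n m v) && ((ql n m v).*2 < m.+2)%N.
Proof.
rewrite /ql; elim/big_ind: _ => // [|x y]; last by rewrite /maxn; case: ifP.
by rewrite /piv big_geq ?dvdz0.
Qed.

Lemma qr_pivot n m v : is_vertex n m v -> piv n m v (qr n m v) && (m.+2 <= (qr n m v).*2)%N.
Proof.
move=> vertex_v; rewrite /qr; elim/big_ind: _ => // [|x y]; last by rewrite /minn; case: ifP.
by rewrite /piv leqnn vertex_dvd_psum //=; lia.
Qed.

Lemma ql_max n m v q : piv n m v q -> (q.*2 < m.+2)%N -> (q <= ql n m v)%N.
Proof.
move=> piv_q lt_q; have /andP [le_q _] := piv_q.
by apply: (leq_bigmax_cond (Ordinal (le_q : q < m.+3)%N)); rewrite /= piv_q.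
Qed.

Lemma qr_min n m v q : piv n m v q -> (m.+2 <= q.*2)%N -> (qr n m v <= q)%N.
Proof.
move=> piv_q ge_q; have /andP [le_q _] := piv_q.
apply: (@bigmin_le_cond _ nat _ m.+2 (Ordinal (le_q : q < m.+3)%N)
  (fun i => piv n m v i && (m.+2 <= i.*2)%N) (fun i => nat_of_ord i)).
by rewrite /= piv_q.
Qed.

Lemma h2_le n m v q : piv n m v q -> (h2 n m v <= `|q.*2 - m.+2|)%N.
Proof.
move=> piv_q; have /andP [le_q _] := piv_q.
exact: (@bigmin_le_cond _ nat _ m.+2 (Ordinal (le_q : q < m.+3)%N)
  (fun i => piv n m v i) (fun i => `|(nat_of_ord i).*2 - m.+2|%N)).
Qed.

Lemma central_psum_bound n m v : (1 < n)%N -> is_vertex n m v ->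
  (h2nm n m <= h2 n m v)%N -> sum_Ic n m v = 0 ->
  exists K K', [/\ (n%:Z %| K)%Z, (n%:Z %| K')%Z &
    forall q, (1 <= q <= m.+1)%N ->
      `|psum v q - K| + `|psum v q - K'| <= weight n (h2nm n m) m q].
Proof.
move=> n_gt1 vertex_v h_le sum0.
have /andP [piv_a lt_a] := ql_pivot n m v.
have /andP [piv_b le_b] := qr_pivot vertex_v.
have h_ge_n : (n <= h2nm n m)%N by rewrite /h2nm; case: ifP.
have := h2_le piv_a; have := h2_le piv_b.
move: (piv_a) (piv_b) => /andP [le_a_m dvd_a] /andP [le_b_m dvd_b] le_hb le_ha.
apply: (psum_between_multiples (a := ql n m v) (b := qr n m v)) => //; try lia.
  have -> : psum v (qr n m v) = psum v (ql n m v) + sum_Ic n m v.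
    by rewrite /psum /sum_Ic -big_cat_nat //; lia.
  by rewrite sum0 addr0.
move=> q /andP [lt_aq lt_qb]; apply/negP => dvd_q.
have piv_q : piv n m v q by rewrite /piv dvd_q andbT; lia.
case: (ltnP q.*2 m.+2) => [lt_q | ge_q].
  by have := ql_max piv_q lt_q; lia.
by have := qr_min piv_q ge_q; lia.
Qed.

(** * The extremal vertices u^(0) and u^(1) *)

Lemma psum_ones m q : (q <= m)%N -> psum (nseq m 1) q = q%:Z.
Proof.
elim: q => [|q IH] le_q; first by rewrite /psum big_geq.
rewrite psumS IH ?nth_nseq; last by lia.
by rewrite (_ : (q < m)%N); lia.
Qed.

Lemma psum_ones_hole m i0 q : (0 < i0)%N -> (q <= m)%N ->
  psum (mkseq (fun j => if j.+1 == i0 then 0 else 1) m) q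
    = q%:Z - (if (i0 <= q)%N then 1 else 0).
Proof.
move=> i0_gt0; elim: q => [|q IH] le_q.
  by rewrite /psum big_geq // leqNgt i0_gt0 subr0.
rewrite psumS IH ?nth_mkseq; try lia.
by case: (leqP i0 q) => ?; case: (leqP i0 q.+1) => ?; case: (q.+1 =P i0) => ?; lia.
Qed.

Lemma u0_coordE n m :
  exists2 c : int, (n%:Z %| c)%Z & u0_coord n m = - ((m - n)./2)%:Z + c.
Proof.
exists (- ((- ((m - n)./2)%:Z) %/ n%:Z)%Z * n%:Z); first exact: dvdz_mull.
have := divz_eq (- ((m - n)./2)%:Z) n%:Z; rewrite /u0_coord.
by set d := (_ %/ _)%Z; set r := (_ %% _)%Z; lia.
Qed.

Lemma psum_u_zero n m : exists2 c : int, (n%:Z %| c)%Z &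
  forall q, (1 <= q <= m.+1)%N -> psum (u_zero n m) q = q%:Z - 1 - ((m - n)./2)%:Z + c.
Proof.
have [c dvd_c u0E] := u0_coordE n m.
exists c => // [[//|q]] q_range.
rewrite /u_zero /complete psum_cons psum_cat ?size_nseq; last by lia.
by rewrite psum_ones ?u0E; lia.
Qed.

Lemma psum_u_one n m : exists2 c : int, (n%:Z %| c)%Z &
  forall q, (1 <= q <= m.+1)%N -> psum (u_one n m) q =
    q%:Z - 1 - ((m - n)./2)%:Z - (if ((m.+2)./2 < q)%N then 1 else 0) + c.
Proof.
have [c dvd_c u0E] := u0_coordE n m.
exists c => // [[//|q]] q_range.
rewrite /u_one /complete psum_cons psum_cat ?size_mkseq; last by lia.
by rewrite psum_ones_hole ?u0E; [case: ifP; lia | lia | lia].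
Qed.

Lemma potential_psum_shift m u t (U : nat -> int) (c : int) :
  (forall q, (1 <= q <= m.+1)%N -> psum u q = U q + c) ->
  potential m u t = \sum_(1 <= q < m.+2) `|U q - (t - c)|.
Proof.
move=> psum_u; apply: eq_big_nat => q q_range.
by rewrite psum_u; [congr `|_|; lia | lia].
Qed.

Lemma sum_reflect m (F : nat -> int) :
  \sum_(1 <= q < m.+2) F (m.+2 - q)%N = \sum_(1 <= q < m.+2) F q.
Proof. by rewrite big_nat_rev; apply: eq_big_nat => q q_range; congr F; lia. Qed.

Lemma dvdz_le0_or_ge (n : nat) (t : int) : (n%:Z %| t)%Z -> t <= 0 \/ n%:Z <= t.
Proof. by move=> /dvdzP [d ->]; case: (lerP d 0) => d_sign; [left | right]; nia. Qed.

Lemma weight_le_pair n h m q (x y t : int) : (n%:Z %| t)%Z -> x + y = n%:Z ->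
  `|(q.*2)%:Z - (m.+2)%:Z| - h%:Z <= `|x - y| - n%:Z ->
  weight n h m q <= `|x - t| + `|y - t|.
Proof. by rewrite /weight => /dvdz_le0_or_ge dvd_t sum_xy; case: dvd_t; lia. Qed.

Lemma dist_self_ge (n : nat) (x t : int) : (n%:Z %| t)%Z -> x + x = n%:Z + 1 ->
  n%:Z <= `|x - t| + `|x - t| + 1.
Proof. by move=> /dvdz_le0_or_ge dvd_t sum_xx; case: dvd_t; lia. Qed.

Lemma sum_weight_le_potential_u_zero n m t :
  (n <= m)%N -> ~~ odd (m - n) -> (n%:Z %| t)%Z ->
  \sum_(1 <= q < m.+2) weight n n m q <= 2 * potential m (u_zero n m) t.
Proof.
move=> le_nm even_mn dvd_t.
have [c dvd_c psum_u] := psum_u_zero n m.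
set r := (m - n)./2 in psum_u.
have m_eq : m = (n + r.*2)%N.
  by have := odd_double_half (m - n); rewrite (negbTE even_mn) /= -/r; lia.
set U := fun q : nat => q%:Z - 1 - r%:Z.
rewrite (potential_psum_shift (U := U) _ psum_u).
set t' := t - c; have dvd_t' : (n%:Z %| t')%Z by apply: rpredB.
apply: (@le_trans _ _ (\sum_(1 <= q < m.+2) (`|U q - t'| + `|U (m.+2 - q)%N - t'|))).
  by apply: ler_sum_nat => q q_range; apply: weight_le_pair; rewrite // /U; lia.
rewrite big_split /= (sum_reflect m (fun q => `|U q - t'|)) (mulr_natl _ 2) mulr2n.
exact: lexx.
Qed.

Lemma sum_weight_le_potential_u_one n m t :
  (n <= m)%N -> odd (m - n) -> (n%:Z %| t)%Z ->
  \sum_(1 <= q < m.+2) weight n n.+1 m q <= 2 * potential m (u_one n m) t + 1.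
Proof.
move=> le_nm odd_mn dvd_t.
have [c dvd_c psum_u] := psum_u_one n m.
set r := (m - n)./2 in psum_u; set i0 := (m.+2)./2 in psum_u.
have m_eq : m = (n + r.*2).+1.
  by have := odd_double_half (m - n); rewrite odd_mn /= -/r; lia.
have i0_range : (1 <= i0 <= m.+1)%N by rewrite /i0; lia.
set U := fun q : nat => q%:Z - 1 - r%:Z - (if (i0 < q)%N then 1 else 0).
rewrite (potential_psum_shift (U := U) _ psum_u).
set t' := t - c; have dvd_t' : (n%:Z %| t')%Z by apply: rpredB.
apply: (@le_trans _ _ (\sum_(1 <= q < m.+2)
  (`|U q - t'| + `|U (m.+2 - q)%N - t'| + (if q == i0 then 1 else 0)))).
  apply: ler_sum_nat => q q_range; rewrite /U.
  case: (ltnP i0 q) => i0_q; case: (ltnP i0 (m.+2 - q)) => i0_q'.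
  - by rewrite /i0 in i0_q i0_q'; lia.
  - apply: ler_wpDr; first by case: (_ == _).
    by apply: weight_le_pair => //; rewrite /i0 in i0_q i0_q'; lia.
  - apply: ler_wpDr; first by case: (_ == _).
    by apply: weight_le_pair => //; rewrite /i0 in i0_q i0_q'; lia.
  - have q_eq : q = i0 by rewrite /i0 in i0_q i0_q' *; lia.
    have -> : (m.+2 - q)%N = q by rewrite q_eq /i0; lia.
    rewrite /weight (_ : (q.*2)%:Z - (m.+2)%:Z = 0); last by rewrite q_eq /i0; lia.
    have := @dist_self_ge n (q%:Z - 1 - r%:Z - 0) t' dvd_t' ltac:(rewrite q_eq /i0; lia).
    by rewrite q_eq eqxx; lia.
rewrite !big_split /= (sum_reflect m (fun q => `|U q - t'|)) (sum_nat_indicator i0_range).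
by rewrite (mulr_natl _ 2) mulr2n; exact: lexx.
Qed.

Lemma sum_weight_le_dist n m k : (n <= m)%N ->
  within n m k (u_zero n m) (zero_vertex m) ->
  (odd (m - n) -> within n m k (u_one n m) (zero_vertex m)) ->
  \sum_(1 <= q < m.+2) weight n (h2nm n m) m q <= 2 * k%:Z + 1.
Proof.
move=> le_nm u0_k u1_k; rewrite /h2nm.
case: (boolP (odd (m - n))) => [odd_mn | even_mn] /=.
  have [t dvd_t le_k] := within_potential (u1_k odd_mn).
  by apply: le_trans (sum_weight_le_potential_u_one le_nm odd_mn dvd_t) _; lia.
have [t dvd_t le_k] := within_potential u0_k.
by apply: le_trans (sum_weight_le_potential_u_zero le_nm even_mn dvd_t) _; lia.
Qed.

Theorem lemma5p30 (n m : nat) (v : seq int) :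
  (1 < n)%N -> (n <= m)%N ->
  is_vertex n m v ->
  (h2nm n m <= h2 n m v)%N ->
  sum_Ic n m v = 0 ->
  dist_le_D n m v.
Proof.
move=> n_gt1 le_nm vertex_v h_le sum0 k u0_k u1_k.
have sum_weight := sum_weight_le_dist le_nm u0_k u1_k.
have [K [K' [dvd_K dvd_K' bound]]] := central_psum_bound n_gt1 vertex_v h_le sum0.
have : potential m v K + potential m v K' <= \sum_(1 <= q < m.+2) weight n (h2nm n m) m q.
  by rewrite -big_split; apply: ler_sum_nat => q q_range; apply: bound.
case: (lerP (potential m v K) k%:Z) => [le_k | gt_k] le_sum.
  exact: potential_within n_gt1 vertex_v dvd_K le_k.
by apply: (potential_within n_gt1 vertex_v dvd_K'); lia.
Qed.
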